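(* Let $P$ and $R$ be complex vector spaces with $\dim P=3$, $\dim R=h$, $R$ carrying a non-degenerate symmetric bilinear form identifying $R\cong R^\vee$. Let $E\subset\mathrm{Hom}(P,R)$ be a generic $h$-dimensional abelian subspace in general position. Then the linear equations defining the polar space $H(E)=\{v\in \mathrm{Hom}(P,R): \mathrm{span}\{E,v\}\text{ is abelian}\}$ have rank $2h$ (i.e. $H(E)$ has codimension $2h$ in $\mathrm{Hom}(P,R)$). Consequently $H(E)=E$, i.e. $E$ is a maximal abelian subspace.
   Context: A linear subspace $E\subset \mathrm{Hom}(P,R)$ is abelian if ${}^tA\,B-{}^tB\,A=0$ for all $A,B\in E$, transposes taken with respect to $R\cong R^\vee$. $E$ is in general position if for a general $u\in P$ the map $E\to R$, $A\mapsto A(u)$, is an isomorphism. Note $\dim \mathrm{Hom}(P,R)=3h$. *)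

From HB Require Import structures.
From mathcomp Require Import all_boot all_order all_algebra.
From mathcomp Require Import reals.
From mathcomp Require Import complex.
From mathcomp Require mpoly.
Set Implicit Arguments. Unset Strict Implicit. Unset Printing Implicit Defensive.
Import GRing.Theory Num.Theory.
Local Open Scope ring_scope.

(* P = F^3 (column vectors 'cV_3), R = F^h (column vectors 'cV_h).
   Hom(P,R) = 'M[F]_(h,3).  The non-degenerate symmetric bilinear form on R is
   (x,y) |-> x^T *m Q *m y with Q symmetric and invertible.
   For A, B in Hom(P,R), the composite  tA B : P -> P^v  is the bilinear form
   (u,w) |-> <A u, B w>_Q, i.e. the 3x3 matrix A^T *m Q *m B.
   A linear subspace E of Hom(P,R) is represented (mxalgebra-style) by a matrix
   whose rows span E, the elements of Hom(P,R) being identified with row vectors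
   of length h*3 via mxvec / vec_mx. *)

Section Defs.
Variable F : fieldType.
Variable h : nat.

Definition tcomp (Q : 'M[F]_h) (A B : 'M[F]_(h,3)) : 'M[F]_3 := A^T *m Q *m B.

Definition abelian_sub (Q : 'M[F]_h) m (E : 'M[F]_(m, h * 3)) : Prop :=
  forall a b : 'rV[F]_(h * 3), (a <= E)%MS -> (b <= E)%MS ->
    tcomp Q (vec_mx a) (vec_mx b) - tcomp Q (vec_mx b) (vec_mx a) = 0.

Definition eval_iso m (E : 'M[F]_(m, h * 3)) (u : 'cV[F]_3) : Prop :=
  (forall a : 'rV[F]_(h * 3), (a <= E)%MS -> vec_mx a *m u = 0 -> a = 0) /\
  (forall r : 'cV[F]_h, exists a : 'rV[F]_(h * 3), (a <= E)%MS /\ vec_mx a *m u = r).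

(* general position: for a general u in P the evaluation map is an isomorphism.
   The set of such u is the complement of the zero set of a polynomial in u
   (a determinant), hence it is a dense open set iff it is nonempty. *)
Definition general_position m (E : 'M[F]_(m, h * 3)) : Prop :=
  exists u : 'cV[F]_3, eval_iso E u.

Definition in_polar (Q : 'M[F]_h) m (E : 'M[F]_(m, h * 3)) (v : 'M[F]_(h,3)) : Prop :=
  abelian_sub Q (col_mx E (mxvec v)).

Definition polar_map (Q : 'M[F]_h) (E : 'M[F]_(h, h * 3)) (v : 'rV[F]_(h * 3))
  : 'rV[F]_(h * (3 * 3)) :=
  mxvec (\matrix_(i < h)
    mxvec (tcomp Q (vec_mx (row i E)) (vec_mx v) - tcomp Q (vec_mx v) (vec_mx (row i E)))).

Definition polar_eqs (Q : 'M[F]_h) (E : 'M[F]_(h, h * 3)) : 'M[F]_(h * 3, h * (3 * 3)) :=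
  lin1_mx (polar_map Q E).

(* coordinates of a basis matrix, used as variables for polynomials *)
Definition coords (E : 'M[F]_(h, h * 3)) : 'I_(h * (h * 3)) -> F :=
  fun k => mxvec E 0 k.

Definition abelian_gp_basis (Q : 'M[F]_h) (E : 'M[F]_(h, h * 3)) : Prop :=
  [/\ row_free E, abelian_sub Q E & general_position E].

End Defs.

From HB Require Import structures.
From mathcomp Require Import all_boot all_order all_algebra.
From mathcomp Require Import reals complex.
From mathcomp Require mpoly.
From mathcomp Require Import zify.
Set Implicit Arguments. Unset Strict Implicit. Unset Printing Implicit Defensive.
Import GRing.Theory Num.Theory.
Local Open Scope ring_scope.

(* Let u be a point where evaluation E -> R is an isomorphism.  If v commutes
   (tA v = tv A) with every A in E, subtract the A0 in E with A0 u = v u; the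
   difference w satisfies w u = 0, so multiplying tA w - tw A = 0 on the left
   by tu leaves t(A u) Q w = 0 for every A in E.  As A u runs over all
   of R and the form is non-degenerate, w = 0, i.e. v lies in E.  Hence the
   polar space of an abelian E in general position is E itself, the kernel of
   the polar equations is h-dimensional, and their rank is 3h - h = 2h -- for
   every such E, not only a generic one. *)

Section TransposeCommutator.
Variables (F : fieldType) (h : nat) (Q : 'M[F]_h).
Implicit Types (A B C : 'M[F]_(h, 3)).

Definition tcomm A B : 'M[F]_3 := tcomp Q A B - tcomp Q B A.

Lemma tcommC A B : tcomm A B = - tcomm B A.
Proof. by rewrite /tcomm opprB. Qed.

Lemma tcomm_linearl B k A C : tcomm (k *: A + C) B = k *: tcomm A B + tcomm C B.
Proof.
rewrite /tcomm /tcomp linearD linearZ /= !mulmxDl !mulmxDr -!scalemxAl -!scalemxAr.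
by rewrite scalerBr opprD addrACA.
Qed.

Lemma tcomm_linearr A k B C : tcomm A (k *: B + C) = k *: tcomm A B + tcomm A C.
Proof. by rewrite tcommC tcomm_linearl opprD -scalerN -!tcommC. Qed.

Lemma tcomm0l B : tcomm 0 B = 0.
Proof. by rewrite /tcomm /tcomp trmx0 !mul0mx mulmx0 subrr. Qed.

Lemma tcomm_rows_eq0 m (E : 'M[F]_(m, h * 3)) B :
  (forall i, tcomm (vec_mx (row i E)) B = 0) ->
  forall a, (a <= E)%MS -> tcomm (vec_mx a) B = 0.
Proof.
move=> rowsE a /submxP [c ->]; rewrite mulmx_sum_row linear_sum /=.
elim/big_rec: _ => [|i x _ IHx]; first by rewrite tcomm0l.
by rewrite linearZ /= tcomm_linearl rowsE IHx scaler0 addr0.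
Qed.

Lemma trcV_mulmx_eq0 n (M : 'M[F]_(h, n)) :
  (forall r : 'cV[F]_h, r^T *m M = 0) -> M = 0.
Proof.
move=> rM0; apply/row_matrixP => i.
by rewrite rowE -[delta_mx _ _]trmxK rM0 row0.
Qed.

Lemma tcomm_eval_kernel m (E : 'M[F]_(m, h * 3)) (u : 'cV[F]_3) w :
  Q \in unitmx ->
  (forall r : 'cV[F]_h, exists a, (a <= E)%MS /\ vec_mx a *m u = r) ->
  w *m u = 0 -> (forall a, (a <= E)%MS -> tcomm (vec_mx a) w = 0) -> w = 0.
Proof.
move=> Qunit evalE_onto wu0 wE.
have Qw0 : Q *m w = 0.
  apply: trcV_mulmx_eq0 => r; have [a [aE au]] := evalE_onto r.
  have := congr1 (mulmx u^T) (wE a aE); rewrite /tcomm /tcomp mulmx0 mulmxBr.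
  rewrite !mulmxA -trmx_mul au -mulmxA -trmx_mul wu0 trmx0 !mul0mx subr0.
  by rewrite mulmxA.
by rewrite -(mulKmx Qunit w) Qw0 mulmx0.
Qed.

Lemma tcomm_eq0_submx m (E : 'M[F]_(m, h * 3)) v :
  Q \in unitmx -> abelian_sub Q E -> general_position E ->
  (forall a, (a <= E)%MS -> tcomm (vec_mx a) v = 0) -> (mxvec v <= E)%MS.
Proof.
move=> Qunit abE [u [_ evalE_onto]] vE.
have [a0 [a0E a0u]] := evalE_onto (v *m u).
suff -> : v = vec_mx a0 by rewrite vec_mxK.
apply/eqP; rewrite -subr_eq0; apply/eqP.
apply: (tcomm_eval_kernel Qunit evalE_onto); first by rewrite mulmxBl a0u subrr.
move=> b bE; rewrite addrC -scaleN1r tcomm_linearr vE // addr0.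
by rewrite [tcomm _ _](abE _ _ bE a0E) scaler0.
Qed.

Lemma in_polarP (E : 'M[F]_(h, h * 3)) v :
  Q \in unitmx -> abelian_sub Q E -> general_position E ->
  in_polar Q E v <-> (mxvec v <= E)%MS.
Proof.
move=> Qunit abE gpE; split => [vpolar | vE a b].
  apply: tcomm_eq0_submx => // a aE.
  have sE : (E <= col_mx E (mxvec v))%MS by rewrite -addsmxE addsmxSl.
  have sv : (mxvec v <= col_mx E (mxvec v))%MS by rewrite -addsmxE addsmxSr.
  by have := vpolar a _ (submx_trans aE sE) sv; rewrite mxvecK.
have sEv : (col_mx E (mxvec v) <= E)%MS by rewrite col_mx_sub submx_refl vE.
by move=> /submx_trans/(_ sEv) aE /submx_trans/(_ sEv); apply: abE.
Qed.

Section PolarEquations.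
Variable E : 'M[F]_(h, h * 3).

Fact polar_map_is_linear : linear (polar_map Q E).
Proof.
move=> k x y; rewrite /polar_map -linearP /=; congr mxvec.
apply/row_matrixP => i; rewrite linearP /= !rowK linearP /=.
by rewrite !rowK -!/(tcomm _ _) tcomm_linearr linearP.
Qed.

HB.instance Definition _ := GRing.isLinear.Build F 'rV[F]_(h * 3)
  'rV[F]_(h * (3 * 3)) *:%R (polar_map Q E) polar_map_is_linear.

Lemma sub_kermx_polar_eqs a : (a <= kermx (polar_eqs Q E))%MS =
  [forall i, tcomm (vec_mx (row i E)) (vec_mx a) == 0].
Proof.
rewrite sub_kermx mul_rV_lin1 /polar_map mxvec_eq0.
apply/eqP/forallP => [polar0 i | rowsE].
  by have := congr1 (row i) polar0; rewrite rowK row0 => /eqP; rewrite mxvec_eq0.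
by apply/row_matrixP => i; rewrite rowK row0; apply/eqP; rewrite mxvec_eq0 rowsE.
Qed.

Lemma kermx_polar_eqs : Q \in unitmx -> abelian_sub Q E -> general_position E ->
  (kermx (polar_eqs Q E) :=: E)%MS.
Proof.
move=> Qunit abE gpE.
have subE (a : 'rV_(h * 3)) : (a <= kermx (polar_eqs Q E))%MS = (a <= E)%MS.
  rewrite sub_kermx_polar_eqs; apply/forallP/idP => [rowsE | aE i].
    rewrite -(vec_mxK a); apply: tcomm_eq0_submx => //.
    by apply: tcomm_rows_eq0 => i; apply/eqP.
  by apply/eqP; apply: abE => //; apply: row_sub.
apply/eqmxP/andP; split; apply/row_subP => i; first by rewrite -subE row_sub.
by rewrite subE row_sub.
Qed.

Lemma rank_polar_eqs : Q \in unitmx -> abelian_gp_basis Q E ->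
  \rank (polar_eqs Q E) = (2 * h)%N.
Proof.
move=> Qunit [freeE abE gpE].
have := mxrank_ker (polar_eqs Q E).
rewrite (kermx_polar_eqs Qunit abE gpE) (eqP freeE).
have := rank_leq_row (polar_eqs Q E); lia.
Qed.

End PolarEquations.
End TransposeCommutator.

Local Open Scope complex_scope.

Theorem proposition3p24 (R : realType) (h : nat) (Q : 'M[R[i]]_h) :
  Q^T = Q -> Q \in unitmx ->
  forall p : mpoly.mpoly (h * (h * 3)) R[i],
    (forall E : 'M[R[i]]_(h, h * 3),
        abelian_gp_basis Q E ->
        \rank (polar_eqs Q E) = (2 * h)%N ->
        (forall v : 'M[R[i]]_(h, 3), in_polar Q E v <-> (mxvec v <= E)%MS) ->
        mpoly.meval (coords E) p = 0) ->
    forall E : 'M[R[i]]_(h, h * 3),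
      abelian_gp_basis Q E -> mpoly.meval (coords E) p = 0.
Proof.
move=> _ Qunit p p_vanishes E gbE.
have [_ abE gpE] := gbE.
apply: p_vanishes => // [|v]; first exact: rank_polar_eqs.
exact: in_polarP.
Qed.
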